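(* Let $(\pi_r)_{r\in\mathbb{N}}$ be periods and let $(K_t)_{t\in\mathbb{N}}$ be the multiperiodic process with periods $(\pi_r)$. Then $(K_t)$ is finite (i.e. $K_t<\infty$ for all $t\in\mathbb{N}$ almost surely) if and only if $$\sum_{r=1}^\infty\frac{1}{\pi_r}=\infty\quad\text{or}\quad \pi_s=1\text{ for some } s\in\mathbb{N}.$$
   Context: $\mathbb{N}=\{1,2,3,\dots\}$. Multiperiodic sequence with periods $\pi_r\in\mathbb{N}$ and seeds $\sigma_r\in\{1,\dots,\pi_r\}$: the sequence $(k_t)_{t\in\mathbb{N}}$ with values in $\mathbb{N}\cup\{\infty\}$ such that for each $r$, the subsequence obtained from $(k_t)$ by deleting all tokens $k_t<r$, denoted $(k^{(r)}_t)_{t\in\mathbb{N}}$, satisfies $k^{(r)}_t=r\iff t\equiv\sigma_r\pmod{\pi_r}$; entries left undefined for all $r$ are set to $\infty$. Equivalently: clocks $\phi_r$ start at $\sigma_r$; for each token, scan $r=1,2,\dots$, decrementing each clock with $\phi_r>1$, until the first $r$ with $\phi_r=1$, output that $r$ and reset $\phi_r=\pi_r$ (output $\infty$ if no such $r$ exists). The multiperiodic process with periods $(\pi_r)$ is the random multiperiodic sequence with these periods and independent random seeds $\Sigma_r$ with $P(\Sigma_r=i)=1/\pi_r$ for $i\in\{1,\dots,\pi_r\}$. *)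

From HB Require Import structures.
From mathcomp Require Import all_boot all_order all_algebra.
From mathcomp Require Import all_classical all_reals all_analysis.
Set Implicit Arguments. Unset Strict Implicit. Unset Printing Implicit Defensive.
Import Order.TTheory GRing.Theory Num.Theory.
Local Open Scope classical_set_scope.
Local Open Scope ring_scope.

(* Indexing convention: Rocq level r : nat corresponds to the paper's level
   r+1, and Rocq time t : nat to the paper's time t+1.  The value infinity
   of a token is represented by None, a finite level r by Some r. *)

Lemma ex_clock1 (phi : nat -> nat) :
  (exists r, phi r = 1%N) -> exists r, phi r == 1%N.
Proof. by case=> r h; exists r; apply/eqP. Qed.

Definition first1 (phi : nat -> nat) : option nat :=
  match pselect (exists r, phi r = 1%N) with
  | left h => Some (ex_minn (ex_clock1 h))
  | right _ => None
  end.

Definition clock_step (pi : nat -> nat) (phi : nat -> nat) : nat -> nat :=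
  fun r =>
    match first1 phi with
    | Some k =>
        if (r < k)%N then (if (1 < phi r)%N then (phi r - 1)%N else phi r)
        else if r == k then pi r else phi r
    | None => if (1 < phi r)%N then (phi r - 1)%N else phi r
    end.

Fixpoint clocks (pi sigma : nat -> nat) (t : nat) : nat -> nat :=
  match t with
  | 0 => sigma
  | t'.+1 => clock_step pi (clocks pi sigma t')
  end.

Definition mp_seq (pi sigma : nat -> nat) (t : nat) : option nat :=
  first1 (clocks pi sigma t).

Definition indep_seeds d (T : measurableType d) (R : realType)
  (P : probability T R) (S : nat -> T -> nat) : Prop :=
  forall (s : seq nat) (v : nat -> nat), uniq s ->
    P [set w | forall r, r \in s -> S r w = v r] =
    (\prod_(r <- s) P [set w | S r w = v r])%E.

(* Write x_r = 1/pi_r.  Clock r advances exactly at the times whose token is at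
   least r, so once the seeds below r are fixed, the value of clock r at time t is
   determined by its own seed, and exactly one of the pi_r seed values makes it 1.
   Counting seed vectors, the probability that no clock below n is at 1 at time t
   (i.e. that the token at time t is at least n) is at most prod_{r<n} (1 - x_r).
   Since (1 + sum x) * prod (1 - x) <= 1, this tends to 0 when sum x_r diverges,
   and it vanishes outright when some x_s = 1.  Conversely, if every seed is at
   least 2 then the very first token is infinite; this happens with probability
   prod_r (1 - x_r), which is positive when sum x_r < oo and every x_r < 1, because
   1 - sum x <= prod (1 - x) on a tail where sum x <= 1/2. *)

From HB Require Import structures.
From mathcomp Require Import all_boot all_order all_algebra.
From mathcomp Require Import all_classical all_reals all_analysis.
From mathcomp Require Import zify lra.
Import Order.TTheory GRing.Theory Num.Theory.
Set Implicit Arguments. Unset Strict Implicit. Unset Printing Implicit Defensive.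
Local Open Scope classical_set_scope.
Local Open Scope ring_scope.

Section Tokens.
Local Open Scope nat_scope.

(* The token emitted when the clocks read [phi] is at least [n]. *)
Definition quiet_below n (phi : nat -> nat) := all (fun j => phi j != 1) (iota 0 n).

Lemma quiet_belowP n phi :
  reflect (forall j, j < n -> phi j != 1) (quiet_below n phi).
Proof.
apply: (iffP allP) => quiet j; last by rewrite mem_iota => /andP[_ /quiet].
by move=> jn; apply: quiet; rewrite mem_iota.
Qed.

Lemma quiet_belowS n phi : quiet_below n.+1 phi = quiet_below n phi && (phi n != 1).
Proof. by rewrite /quiet_below -[n.+1]addn1 iotaD all_cat /= andbT. Qed.

Lemma eq_quiet_below n phi phi' : (forall j, j < n -> phi j = phi' j) ->
  quiet_below n phi = quiet_below n phi'.
Proof. by move=> e; apply: eq_in_all => j; rewrite mem_iota => /andP[_ /e ->]. Qed.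

Lemma first1_NoneP phi : first1 phi = None <-> forall r, phi r != 1.
Proof.
rewrite /first1; case: pselect => [[r r1]|no1].
  by split=> // /(_ r); rewrite r1.
by split=> // _ r; apply/eqP => r1; apply: no1; exists r.
Qed.

Lemma first1_Some phi k : first1 phi = Some k -> phi k = 1 /\ quiet_below k phi.
Proof.
rewrite /first1; case: pselect => // ex1 [<-]; case: ex_minnP => m /eqP m1 m_min.
split=> //; apply/quiet_belowP => j jm; apply: contraTN jm => /m_min.
by rewrite -leqNgt.
Qed.

End Tokens.

Section SeedBoxes.
Local Open Scope nat_scope.
Variable rng : nat -> seq nat.

Fixpoint box n : seq (seq nat) :=
  if n is n'.+1 then [seq rcons v x | v <- box n', x <- rng n'] else [:: [::]].

Lemma mem_boxP n v :
  reflect (size v = n /\ forall r, r < n -> nth 0 v r \in rng r) (v \in box n).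
Proof.
elim: n v => [|n IH] v.
  by case: v => [|x v]; constructor; [|case].
case/lastP: v => [|v x].
  by apply: (iffP allpairsP) => [[[[|? ?] ?] [_ _]]|[]].
rewrite size_rcons; apply: (iffP allpairsP) => [[[v' x'] /= [/IH[sz v'_rng] x'_rng]]|[]].
  move=> /rcons_inj[-> ->]; split=> [|r]; first by rewrite sz.
  by rewrite ltnS leq_eqVlt nth_rcons sz => /orP[/eqP->|rn]; rewrite ?ltnn ?eqxx ?rn ?v'_rng.
move=> /eqP; rewrite eqSS => /eqP sz v_rng; exists (v, x) => /=; split=> //.
  by apply/IH; split=> // r rn; have := v_rng r (ltnW rn); rewrite nth_rcons sz rn.
by have := v_rng n (ltnSn n); rewrite nth_rcons sz ltnn eqxx.
Qed.

Lemma box_uniq n : (forall r, uniq (rng r)) -> uniq (box n).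
Proof.
move=> rng_uniq; elim: n => [|n IH] //=.
by apply: allpairs_uniq => // -[v x] [v' x'] _ _ /= /rcons_inj [-> ->].
Qed.

Lemma size_box n : size (box n) = \prod_(0 <= r < n) size (rng r).
Proof.
elim: n => [|n IH]; first by rewrite big_geq.
by rewrite big_nat_recr //= size_allpairs IH.
Qed.

Lemma count_boxS (a : pred (seq nat)) n :
  count a (box n.+1) = \sum_(v <- box n) count (fun x => a (rcons v x)) (rng n).
Proof. by rewrite count_flatten sumnE !big_map; apply: eq_bigr => v _; rewrite count_map. Qed.
End SeedBoxes.

Section Clocks.
Local Open Scope nat_scope.
Variable pi : nat -> nat.

Lemma clock_stepE phi r : clock_step pi phi r =
  if quiet_below r phi then (if phi r == 1 then pi r else (phi r).-1) else phi r.
Proof.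
have tick m : m != 1 -> (if 1 < m then m - 1 else m) = m.-1.
  by case: m => [|[|m]].
rewrite /clock_step; case E: (first1 phi) => [k|].
  have [k1 /quiet_belowP qk] := first1_Some E.
  have [rk|kr|->] := ltngtP r k.
  - have -> : quiet_below r phi by apply/quiet_belowP => j jr; apply/qk/(ltn_trans jr).
    by rewrite (negbTE (qk r rk)) tick ?qk.
  - have -> // : quiet_below r phi = false.
    by apply/negbTE/negP => /quiet_belowP/(_ k kr); rewrite k1.
  - have -> : quiet_below k phi by exact/quiet_belowP.
    by rewrite k1 eqxx.
move: E => /first1_NoneP no1.
have -> : quiet_below r phi by apply/quiet_belowP.
by rewrite (negbTE (no1 r)) tick.
Qed.

Lemma eq_clocks_below sigma sigma' n : (forall j, j < n -> sigma j = sigma' j) ->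
  forall t j, j < n -> clocks pi sigma t j = clocks pi sigma' t j.
Proof.
move=> e; elim=> [|t IH] j jn //=; first exact: e.
rewrite !clock_stepE IH // (@eq_quiet_below j _ (clocks pi sigma' t)) // => i ij.
exact/IH/(ltn_trans ij).
Qed.

Definition advances sigma n t :=
  count (fun s => quiet_below n (clocks pi sigma s)) (iota 0 t).

Lemma eq_advances sigma sigma' n : (forall j, j < n -> sigma j = sigma' j) ->
  forall t, advances sigma n t = advances sigma' n t.
Proof. by move=> e t; apply: eq_count => s; apply/eq_quiet_below/eq_clocks_below. Qed.

Lemma clocks_advances_mod sigma n t : 1 <= sigma n <= pi n ->
  1 <= clocks pi sigma t n <= pi n /\
  clocks pi sigma t n + advances sigma n t = sigma n %[mod pi n].
Proof.
move=> sigma_n; elim: t => [|t [c_range IH]]; first by rewrite /advances addn0.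
rewrite /= clock_stepE /advances -[t.+1]addn1 iotaD count_cat -/(advances _ _ _) /=.
case: quiet_below => /=; last by rewrite !addn0.
rewrite addn1; case: eqVneq => [c1|c_ne1]; first by rewrite leqnn -IH c1 modnDl add1n; lia.
by split; [lia | rewrite -IH; congr (_ %% _); lia].
Qed.

Lemma clocks_eq1 sigma n t : 1 <= sigma n <= pi n ->
  sigma n = advances sigma n t %% pi n + 1 -> clocks pi sigma t n = 1.
Proof.
move=> sigma_n sigmaE; have [] := clocks_advances_mod t sigma_n.
set c := clocks _ _ _ _; set p := pi n => c_range.
rewrite sigmaE modnDml (addnC c) => /eqP; rewrite eqn_modDl => /eqP.
have [cp|->] : c < p \/ c = p by lia.
  by rewrite !modn_small //; lia.
by rewrite modnn => /esym/eqP; rewrite -/(dvdn p 1) dvdn1 => /eqP.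
Qed.

Lemma count_quiet_extensions n t v : 0 < pi n -> size v = n ->
  count (fun x => quiet_below n.+1 (clocks pi (nth 0 (rcons v x)) t)) (iota 1 (pi n))
  <= (pi n).-1 * quiet_below n (clocks pi (nth 0 v) t).
Proof.
move=> pi_n sz.
have prefix x j : j < n -> nth 0 (rcons v x) j = nth 0 v j by rewrite nth_rcons sz => ->.
(* the one seed of level [n] whose clock reads 1 at time [t] *)
set x0 := advances (nth 0 v) n t %% pi n + 1.
have x0_range : 1 <= x0 <= pi n by rewrite /x0 addn1 ltn_pmod.
have clock_x0 : clocks pi (nth 0 (rcons v x0)) t n = 1.
  by apply: clocks_eq1; rewrite nth_rcons sz ltnn eqxx // (eq_advances (prefix x0)).
set q := quiet_below n (clocks pi (nth 0 v) t).
have quiet_ext x : quiet_below n.+1 (clocks pi (nth 0 (rcons v x)) t) -> q && (x != x0).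
  rewrite quiet_belowS => /andP[q_ext c_ne1]; apply/andP; split.
    by rewrite /q -(eq_quiet_below (eq_clocks_below (prefix x) t)).
  by apply: contraNneq c_ne1 => ->; rewrite clock_x0.
apply: leq_trans (sub_count (a2 := fun x => q && (x != x0)) quiet_ext _) _; rewrite mulnC.
case: (q); last by rewrite count_pred0.
have := count_predC (pred1 x0) (iota 1 (pi n)).
rewrite count_uniq_mem ?iota_uniq // mem_iota size_iota add1n ltnS x0_range.
by rewrite mul1n (eq_count (a2 := predC (pred1 x0))) //; lia.
Qed.

Lemma count_quiet_box n t : (forall r, 0 < pi r) ->
  count (fun v => quiet_below n (clocks pi (nth 0 v) t)) (box (fun r => iota 1 (pi r)) n)
  <= \prod_(0 <= r < n) (pi r).-1.
Proof.
move=> pi_gt0; elim: n => [|n IH]; first by rewrite big_geq.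
rewrite count_boxS big_nat_recr //= mulnC; apply: leq_trans (leq_mul (leqnn _) IH).
rewrite -sum1_count big_distrr [X in _ <= X]big_mkcond /= !big_seq.
apply: leq_sum => v /mem_boxP[sz _].
by have := count_quiet_extensions t (pi_gt0 n) sz; case: quiet_below; rewrite ?muln1 ?muln0.
Qed.
End Clocks.

Section ProductOfComplements.
Variables (R : realType) (x : nat -> R).
Hypothesis x01 : forall r, 0 <= x r <= 1.

Lemma prod1m_ge0 m n : 0 <= \prod_(m <= r < n) (1 - x r).
Proof. by apply: prodr_ge0 => r _; have := x01 r; lra. Qed.

Lemma prod1m_le1 m n : \prod_(m <= r < n) (1 - x r) <= 1.
Proof. by apply: prodr_ile1 => r _; have := x01 r; lra. Qed.

Lemma prod1m_nonincreasing m n : (m <= n)%N ->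
  \prod_(0 <= r < n) (1 - x r) <= \prod_(0 <= r < m) (1 - x r).
Proof.
move=> mn; rewrite (big_cat_nat (leq0n m) mn) /=.
by rewrite ler_piMr ?prod1m_ge0 ?prod1m_le1.
Qed.

Lemma partial_sum_ge0 m n : 0 <= \sum_(m <= r < n) x r.
Proof. by apply: sumr_ge0 => r _; have /andP[] := x01 r. Qed.

Lemma prod1m_mul_1Dsum_le1 n :
  (1 + \sum_(0 <= r < n) x r) * \prod_(0 <= r < n) (1 - x r) <= 1.
Proof.
elim: n => [|n IH]; first by rewrite !big_geq // mulr1 addr0.
rewrite !big_nat_recr //=.
have := prod1m_ge0 0 n; have := prod1m_le1 0 n; have := partial_sum_ge0 0 n.
move: IH (x01 n); set s := \sum_(0 <= r < n) _; set p := \prod_(0 <= r < n) _.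
move: (x n) => a IH /andP[a0 a1] s0 p1 p0.
have : 0 <= (1 - a) * (1 - (1 + s) * p) by apply: mulr_ge0; lra.
have : 0 <= a * (1 - a) * (1 - p) by rewrite !mulr_ge0 //; lra.
nra.
Qed.

Lemma prod1m_ge_1Bsum m n :
  1 - \sum_(m <= r < n) x r <= \prod_(m <= r < n) (1 - x r).
Proof.
elim: n => [|n IH]; first by rewrite !big_geq.
have [mn|nm] := leqP m n; last by rewrite !big_geq.
rewrite !big_nat_recr //=.
have := prod1m_ge0 m n; have := partial_sum_ge0 m n.
move: IH (x01 n); set s := \sum_(m <= r < n) _; set p := \prod_(m <= r < n) _.
move: (x n) => a IH /andP[a0 a1] s0 p0.
have : 0 <= (1 - a) * (p - (1 - s)) by apply: mulr_ge0; lra.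
have : 0 <= a * s by apply: mulr_ge0.
nra.
Qed.

Local Open Scope ereal_scope.

Lemma partial_sums_cvg :
  (\sum_(0 <= r < n) (x r)%:E) @[n --> \oo] --> \sum_(0 <= r <oo) (x r)%:E.
Proof. by apply: is_cvg_nneseries => r _ _; rewrite lee_fin; have /andP[] := x01 r. Qed.

Lemma prod1m_vanishing : \sum_(0 <= r <oo) (x r)%:E = +oo ->
  forall e : R, (0 < e)%R -> exists n, (\prod_(0 <= r < n) (1 - x r) <= e)%R.
Proof.
move=> sum_oo e e0.
have := partial_sums_cvg; rewrite sum_oo => /cvgey_gt/(_ e^-1%R)[N _ hN].
exists N; have := hN N (leqnn N); rewrite /= sumEFin lte_fin.
have := prod1m_mul_1Dsum_le1 N; have := prod1m_ge0 0 N; have := partial_sum_ge0 0 N.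
set s := (\sum_(0 <= r < N) _)%R; set p := (\prod_(0 <= r < N) _)%R => s0 p0 sp1 lt_sum.
have ie0 : (0 < e^-1)%R by rewrite invr_gt0.
have ps0 : (0 <= (s - e^-1) * p)%R by apply: mulr_ge0; lra.
by rewrite -(ler_pM2l ie0) mulVf ?gt_eqF //; nra.
Qed.

Lemma prod1m_bounded_below : \sum_(0 <= r <oo) (x r)%:E != +oo ->
  (forall r, x r < 1)%R ->
  exists2 c : R, (0 < c)%R & forall n, (c <= \prod_(0 <= r < n) (1 - x r))%R.
Proof.
move=> sum_fin x_lt1.
have x_ge0 r : 0 <= (x r)%:E by rewrite lee_fin; have /andP[] := x01 r.
have tail0 : \sum_(N <= r <oo) (x r)%:E @[N --> \oo] --> 0.
  by apply: nneseries_tail_cvg => //; rewrite ltey.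
have half_nbhs : nbhs (0 : \bar R) [set y | y < (1/2)%:E].
  by apply/nbhs_EFin; apply: filterS (@lt_nbhsl R 0 (1/2) _) => [y|]; rewrite /= ?lte_fin.
have [N _ tailN] := tail0 _ half_nbhs.
exists ((\prod_(0 <= r < N) (1 - x r)) / 2)%R.
  by rewrite divr_gt0 // prodr_gt0 // => r _; rewrite subr_gt0.
move=> n; apply: le_trans (prod1m_nonincreasing (leq_maxl n N)).
have Nm := leq_maxr n N; rewrite (big_cat_nat (leq0n N) Nm) /=.
have : (\sum_(N <= r < maxn n N) x r <= 1/2)%R.
  rewrite -lee_fin -sumEFin (le_trans (nneseries_lim_ge _ (fun r _ _ => x_ge0 r))) //.
  exact/ltW/(tailN N (leqnn N)).
have := prod1m_ge_1Bsum N (maxn n N); have := prod1m_ge0 0 N.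
set p := (\prod_(0 <= r < N) _)%R; set q := (\prod_(N <= r < _) _)%R.
move=> p0 q_ge s_le; have : (0 <= p * (q - 1/2))%R by apply: mulr_ge0; lra.
nra.
Qed.
End ProductOfComplements.

Section FiniteFibres.
Variables (d : measure_display) (T : measurableType d) (R : realType).
Variables (A : eqType) (g : T -> A).
Hypothesis g_fibre : forall a, measurable [set w | g w = a].

Lemma preimage_mem_cons a (s : seq A) :
  [set w | g w \in a :: s] = [set w | g w = a] `|` [set w | g w \in s].
Proof.
apply/seteqP; split=> w /=; rewrite in_cons; first by case/orP=> [/eqP|]; [left|right].
by case=> [->|->]; rewrite ?eqxx ?orbT.
Qed.

Lemma measurable_preimage_mem (s : seq A) : measurable [set w | g w \in s].
Proof.
elim: s => [|a s IH]; last by rewrite preimage_mem_cons; exact: measurableU.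
by rewrite (_ : [set w | _] = set0) //; apply/seteqP; split.
Qed.

Lemma measure_preimage_mem (mu : {measure set T -> \bar R}) (s : seq A) : uniq s ->
  mu [set w | g w \in s] = (\sum_(a <- s) mu [set w | g w = a])%E.
Proof.
elim: s => [_|a s IH /andP[a_s s_uniq]].
  by rewrite big_nil (_ : [set w | _] = set0) ?measure0 //; apply/seteqP; split.
rewrite big_cons -IH // preimage_mem_cons measureU //; first exact: measurable_preimage_mem.
by apply/seteqP; split=> // w [/= ->]; apply/negP.
Qed.
End FiniteFibres.

Section MultiperiodicProcess.
Variables (d : measure_display) (T : measurableType d) (R : realType).
Variables (P : probability T R) (pi : nat -> nat) (S : nat -> T -> nat).
Hypothesis pi_gt0 : forall r, (0 < pi r)%N.
Hypothesis S_measurable : forall r i, measurable [set w | S r w = i].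
Hypothesis S_uniform : forall r i, (1 <= i <= pi r)%N ->
  P [set w | S r w = i] = ((pi r)%:R^-1 : R)%:E.
Hypothesis S_indep : indep_seeds P S.

Let seeds n w := mkseq (S^~ w) n.

Lemma measurable_seeds_eq n v : measurable [set w | seeds n w = v].
Proof.
elim: n v => [|n IH] v.
  case: v => [|x v]; last by rewrite (_ : [set w | _] = set0) //; apply/seteqP; split.
  by rewrite (_ : [set w | _] = setT) //; apply/seteqP; split.
case/lastP: v => [|v x].
  by rewrite (_ : [set w | _] = set0) //; apply/seteqP; split=> w //=.
rewrite (_ : [set w | _] = [set w | seeds n w = v] `&` [set w | S n w = x]).
  exact: measurableI.
apply/seteqP; split=> w; rewrite /= /seeds mkseqS; first by case/rcons_inj=> -> ->.
by case=> -> ->.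
Qed.

Lemma P_seeds_eq n v : size v = n -> (forall r, r < n -> 1 <= nth 0 v r <= pi r)%N ->
  P [set w | seeds n w = v] = (\prod_(0 <= r < n) (pi r)%:R^-1)%:E.
Proof.
move=> sz v_range.
have -> : [set w | seeds n w = v] = [set w | forall r, r \in iota 0 n -> S r w = nth 0 v r].
  apply/seteqP; split=> w /=.
    by move=> <- r; rewrite mem_iota => /andP[_ rn]; rewrite nth_mkseq.
  move=> Sv; apply: (@eq_from_nth _ 0); first by rewrite size_mkseq sz.
  by move=> r; rewrite size_mkseq => rn; rewrite nth_mkseq // Sv // mem_iota.
rewrite S_indep ?iota_uniq // -prodEFin /index_iota subn0 !big_seq.
by apply: eq_bigr => r; rewrite mem_iota => /andP[_ rn]; rewrite S_uniform ?v_range.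
Qed.

Lemma P_seeds_mem n (V : seq (seq nat)) : uniq V ->
  (forall v, v \in V -> size v = n /\ forall r, r < n -> 1 <= nth 0 v r <= pi r)%N ->
  P [set w | seeds n w \in V] = ((\prod_(0 <= r < n) (pi r)%:R^-1) *+ size V)%:E.
Proof.
move=> V_uniq V_range; rewrite measure_preimage_mem //; last exact: measurable_seeds_eq.
rewrite big_seq (eq_bigr (fun=> (\prod_(0 <= r < n) (pi r)%:R^-1)%:E)).
  by rewrite -big_seq sumEFin big_const_seq count_predT iter_addr_0.
by move=> v /V_range[sz v_range]; exact: P_seeds_eq.
Qed.

Lemma prod_inv_periods_mulrn n :
  (\prod_(0 <= r < n) (pi r)%:R^-1 : R) *+ \prod_(0 <= r < n) (pi r).-1 =
  \prod_(0 <= r < n) (1 - (pi r)%:R^-1).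
Proof.
rewrite -mulr_natr natr_prod -big_split; apply: eq_bigr => r _ /=.
by rewrite -subn1 natrB // mulrBr mulr1 mulVf // pnatr_eq0 -lt0n.
Qed.

Lemma inv_period01 r : 0 <= ((pi r)%:R^-1 : R) <= 1.
Proof. by rewrite invr_ge0 ler0n invf_le1 ?ltr0n ?ler1n ?pi_gt0. Qed.

Let quiet_event n t := [set w | seeds n w \in
  [seq v <- box (fun r => iota 1 (pi r)) n | quiet_below n (clocks pi (nth 0 v) t)]].

Lemma P_quiet_event n t :
  (P (quiet_event n t) <= (\prod_(0 <= r < n) (1 - (pi r)%:R^-1))%:E)%E.
Proof.
rewrite P_seeds_mem.
- rewrite lee_fin size_filter -prod_inv_periods_mulrn; apply: ler_wpMn2l.
    by apply: prodr_ge0 => r _; rewrite invr_ge0.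
  exact: count_quiet_box.
- by rewrite filter_uniq // box_uniq // => r; apply: iota_uniq.
- move=> v; rewrite mem_filter => /andP[_ /mem_boxP[sz v_range]]; split=> // r /v_range.
  by rewrite mem_iota add1n ltnS.
Qed.

Lemma negligible_seed_out_of_range r :
  P.-negligible (~` [set w | S r w \in iota 1 (pi r)]).
Proof.
have in_range := measurable_preimage_mem (S_measurable r) (iota 1 (pi r)).
exists (~` [set w | S r w \in iota 1 (pi r)]); split=> //; first exact: measurableC.
rewrite probability_setC // measure_preimage_mem ?iota_uniq // big_seq.
rewrite (eq_bigr (fun=> ((pi r)%:R^-1)%:E)); last first.
  by move=> i; rewrite mem_iota add1n ltnS => /S_uniform.
rewrite -big_seq sumEFin big_const_seq count_predT iter_addr_0 size_iota.
by rewrite -[_ *+ pi r]mulr_natr mulVf ?pnatr_eq0 -?lt0n // subee.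
Qed.

Lemma infinite_token_sub t : [set w | mp_seq pi (S^~ w) t = None] `<=`
  (\bigcup_r ~` [set w | S r w \in iota 1 (pi r)]) `|` \bigcap_n quiet_event n t.
Proof.
move=> w /first1_NoneP no1.
have [[r /= r_out]|in_range] := pselect (exists r, S r w \notin iota 1 (pi r)).
  by left; exists r => //=; apply/negP.
right=> n _; rewrite /quiet_event /= mem_filter; apply/andP; split.
  rewrite (@eq_quiet_below n _ (clocks pi (S^~ w) t)) => [|r rn].
    by apply/quiet_belowP => r _; exact: no1.
  by apply: eq_clocks_below rn => j jn; rewrite nth_mkseq.
apply/mem_boxP; split=> [|r rn]; first by rewrite size_mkseq.
by rewrite nth_mkseq //; apply/negPn/negP => r_out; apply: in_range; exists r.
Qed.

Lemma negligible_infinite_token t :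
  (forall e : R, 0 < e -> exists n, \prod_(0 <= r < n) (1 - (pi r)%:R^-1) <= e) ->
  P.-negligible [set w | mp_seq pi (S^~ w) t = None].
Proof.
move=> vanishing; apply: negligibleS (@infinite_token_sub t) _.
apply: negligibleU; first exact: negligible_bigcup negligible_seed_out_of_range.
have quiet_measurable n : measurable (quiet_event n t).
  exact: measurable_preimage_mem (measurable_seeds_eq n) _.
exists (\bigcap_n quiet_event n t); split=> //; first exact: bigcapT_measurable.
apply/eqP; rewrite eq_le measure_ge0 andbT; apply/lee_addgt0Pr => e e0.
have [n prod_le] := vanishing e e0; rewrite add0e.
have cap_le : (P (\bigcap_n quiet_event n t) <= P (quiet_event n t))%E.
  by apply: le_measure; rewrite ?inE //; [exact: bigcapT_measurable|move=> w /(_ n I)].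
by apply: le_trans cap_le (le_trans (P_quiet_event n t) _); rewrite lee_fin.
Qed.

Lemma ae_finite_tokens :
  (forall e : R, 0 < e -> exists n, \prod_(0 <= r < n) (1 - (pi r)%:R^-1) <= e) ->
  {ae P, forall w t, mp_seq pi (S^~ w) t != None}.
Proof.
move=> vanishing.
apply: negligibleS (negligible_bigcup (fun t => negligible_infinite_token t vanishing)).
by move=> w /= /existsNP[t /negP]; rewrite negbK => /eqP; exists t.
Qed.

Lemma inv_period_lt1 r : pi r != 1%N -> ((pi r)%:R^-1 : R) < 1.
Proof.
by move=> /eqP pi_ne1; rewrite invf_lt1 ?ltr0n ?pi_gt0 // ltr1n; have := pi_gt0 r; lia.
Qed.

Let seeds_ge2_event n := [set w | seeds n w \in box (fun r => iota 2 (pi r).-1) n].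

Lemma P_seeds_ge2_event n :
  P (seeds_ge2_event n) = (\prod_(0 <= r < n) (1 - (pi r)%:R^-1))%:E.
Proof.
rewrite P_seeds_mem.
- rewrite size_box -prod_inv_periods_mulrn; congr ((_ *+ _)%:E).
  by apply: eq_bigr => r _; rewrite size_iota.
- by apply: box_uniq => r; exact: iota_uniq.
move=> v /mem_boxP[sz v_range]; split=> // r /v_range.
by rewrite mem_iota; have := pi_gt0 r; lia.
Qed.

Lemma measurable_seeds_ge2_event n : measurable (seeds_ge2_event n).
Proof. exact: measurable_preimage_mem (measurable_seeds_eq n) _. Qed.

Lemma seeds_ge2_first_token_infinite :
  \bigcap_n seeds_ge2_event n `<=` [set w | mp_seq pi (S^~ w) 0 = None].
Proof.
move=> w w_ge2; apply/first1_NoneP => r /=.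
have /mem_boxP[_ /(_ r (ltnSn r))] := w_ge2 r.+1 I.
by rewrite /seeds nth_mkseq // mem_iota; case: (S r w) => [|[|]].
Qed.

Lemma P_seeds_ge2_cap_gt0 :
  (\sum_(0 <= r <oo) ((pi r)%:R^-1 : R)%:E)%E != +oo%E -> (forall s, pi s != 1%N) ->
  (0 < P (\bigcap_n seeds_ge2_event n))%E.
Proof.
move=> sum_fin pi_ne1.
have [c c0 c_le] :=
  prod1m_bounded_below inv_period01 sum_fin (fun r => inv_period_lt1 (pi_ne1 r)).
have ge2_nonincreasing : {homo seeds_ge2_event : n m / (n <= m)%N >-> (m <= n)%O}.
  move=> n m nm; apply/subsetPset => w /mem_boxP[_ w_range]; apply/mem_boxP.
  rewrite size_mkseq; split=> // r rn; have := w_range r (leq_trans rn nm).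
  by rewrite !nth_mkseq // (leq_trans rn nm).
have P_ge2_0 : (P (seeds_ge2_event 0) < +oo)%E.
  by rewrite (le_lt_trans (probability_le1 P (measurable_seeds_ge2_event 0))) ?ltry.
have P_ge2_cvg := nonincreasing_cvg_mu P_ge2_0 measurable_seeds_ge2_event
  (bigcapT_measurable measurable_seeds_ge2_event) ge2_nonincreasing.
apply: (@lt_le_trans _ _ c%:E); first by rewrite lte_fin.
rewrite -(cvg_lim _ P_ge2_cvg) //; apply: lime_ge; first exact: cvgP P_ge2_cvg.
by apply: nearW => n /=; rewrite P_seeds_ge2_event lee_fin.
Qed.

Lemma not_ae_finite_tokens :
  (\sum_(0 <= r <oo) ((pi r)%:R^-1 : R)%:E)%E != +oo%E -> (forall s, pi s != 1%N) ->
  ~ {ae P, forall w t, mp_seq pi (S^~ w) t != None}.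
Proof.
move=> sum_fin pi_ne1 [N [N_measurable PN0 infinite_sub]].
have : (P (\bigcap_n seeds_ge2_event n) <= P N)%E.
  apply: le_measure; rewrite ?inE //; first exact: bigcapT_measurable measurable_seeds_ge2_event.
  move=> w /seeds_ge2_first_token_infinite /= w0; apply: infinite_sub => /(_ 0%N).
  by rewrite w0.
by rewrite PN0 leNgt P_seeds_ge2_cap_gt0.
Qed.

Lemma prod_inv_periods_vanishing :
  ((\sum_(0 <= r <oo) ((pi r)%:R^-1 : R)%:E)%E = +oo%E \/ exists s, pi s = 1%N) ->
  forall e : R, 0 < e -> exists n, \prod_(0 <= r < n) (1 - (pi r)%:R^-1) <= e.
Proof.
case=> [sum_oo|[s pi_s] e e0]; first exact: prod1m_vanishing inv_period01 sum_oo.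
by exists s.+1; rewrite big_nat_recr //= pi_s invr1 subrr mulr0 ltW.
Qed.

End MultiperiodicProcess.

Unset Implicit Arguments.

Theorem theorem3 (d : measure_display) (T : measurableType d) (R : realType)
    (P : probability T R) (pi : nat -> nat) (S : nat -> T -> nat) :
  (forall r, (0 < pi r)%N) ->
  (forall r i, measurable [set w | S r w = i]) ->
  (forall r i, (1 <= i <= pi r)%N ->
     P [set w | S r w = i] = ((pi r)%:R^-1 : R)%:E) ->
  indep_seeds P S ->
  ({ae P, forall w, forall t, mp_seq pi (fun r => S r w) t != None} <->
   ((\sum_(0 <= r <oo) ((pi r)%:R^-1 : R)%:E)%E = +oo%E
    \/ exists s, pi s = 1%N)).
Proof.
move=> pi_gt0 S_measurable S_uniform S_indep; split=> [finite|]; last first.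
  move/(prod_inv_periods_vanishing pi_gt0).
  exact: ae_finite_tokens pi_gt0 S_measurable S_uniform S_indep.
have [|no_period1] := pselect (exists s, pi s = 1%N); first by right.
left; apply/eqP; apply: contraPP finite => /negP sum_fin.
apply: not_ae_finite_tokens pi_gt0 S_measurable S_uniform S_indep sum_fin _.
by move=> s; apply/eqP => pi_s; apply: no_period1; exists s.
Qed.
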